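(* Let $L>0$, $\tau>0$ and let $Z_1,\dots,Z_m$ be random variables with $\max_{1\le j\le m}\|Z_j\|_{\Psi_2(\cdot;L)}\le\tau$. Then $$\Big\|\Big(\max_{1\le j\le m}|Z_j|-\frac{\tau}{L}\,h_2^{-1}\Big(\frac{L^2}{2}\log(1+m)\Big)\Big)_+\Big\|_{\Psi_2(\cdot;\sqrt3 L)}\le\sqrt3\,\tau .$$
   Context: For $x\ge 0$ let $h_2(x)=(1+x)\log(1+x)-x$, an increasing bijection of $[0,\infty)$ onto itself, with inverse $h_2^{-1}$. For $L>0$ let $\Psi_2(x;L)=\exp\big(\frac{2}{L^2}h_2(Lx)\big)-1$. The Orlicz norm is $\|X\|_{\Psi}=\inf\{c>0: E\Psi(|X|/c)\le 1\}$; $(a)_+=\max(a,0)$. *)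

From HB Require Import structures.
From mathcomp Require Import all_boot all_order all_algebra.
From mathcomp Require Import all_classical all_reals all_analysis.
Set Implicit Arguments. Unset Strict Implicit. Unset Printing Implicit Defensive.
Import Order.TTheory GRing.Theory Num.Theory.
Import numFieldNormedType.Exports.
Local Open Scope classical_set_scope.
Local Open Scope ring_scope.

Definition h2 {R : realType} (x : R) : R := (1 + x) * ln (1 + x) - x.

Definition h2inv {R : realType} (y : R) : R :=
  get [set x : R | 0 <= x /\ h2 x = y].

Definition Psi2 {R : realType} (L : R) (x : R) : R :=
  expR (2 / L ^+ 2 * h2 (L * x)) - 1.

(* Orlicz norm ||X||_Psi = inf {c > 0 | E Psi(|X|/c) <= 1}, in \bar R
   (+oo if the set is empty). *)
Definition orlicz_norm {d} {T : measurableType d} {R : realType}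
  (P : probability T R) (Psi : R -> R) (X : T -> R) : \bar R :=
  ereal_inf [set c%:E | c in [set c : R | 0 < c /\
     (\int[P]_x (Psi (`|X x| / c))%:E <= 1)%E]].

Definition pos_part {R : realType} (a : R) : R := Num.max a 0.

(* Write Psi_2(s; L) = e^{phi(s)} - 1 with phi(s) = 2/L^2 h_2(L s), and let
   b = h_2^{-1}(L^2/2 log(1+m)), so that 2/L^2 h_2(b) = log(1+m).  Since h_2 is
   superadditive on [0,oo), phi(r) + log(1+m) <= phi(r + b/L); with
   M = max_j |Z_j| and r = (M - tau b/L)_+ / tau this gives
   (1+m)(1 + Psi_2(r; L)) <= 1 + Psi_2(M/tau; L) <= 1 + sum_j Psi_2(|Z_j|/tau; L).
   Moreover Psi_2(r/sqrt 3; sqrt 3 L) <= Psi_2(r; L), so taking expectations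
   E Psi_2((M - tau b/L)_+ / (sqrt 3 tau); sqrt 3 L) <= m/(1+m) <= 1.
   The Orlicz-norm infimum need not be attained: E Psi(|Z_j|/tau) <= 1 is
   obtained from the admissible constants c > tau by monotone convergence. *)

From HB Require Import structures.
From mathcomp Require Import all_boot all_order all_algebra.
From mathcomp Require Import all_classical all_reals all_analysis.
From mathcomp Require Import ring lra measurable_realfun.
Import Order.TTheory GRing.Theory Num.Theory.
Import numFieldNormedType.Exports.
Local Open Scope classical_set_scope.
Local Open Scope ring_scope.

Section h2.
Context {R : realType}.

Lemma subr1V_le_ln {x : R} : 0 < x -> 1 - x^-1 <= ln x.
Proof.
move=> x0; have h : -1 < x^-1 - 1 by rewrite ltrBrDr addNr invr_gt0.
have := le_ln1Dx h; rewrite [1 + _]addrC subrK lnV ?posrE //; lra.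
Qed.

Lemma h2_0 : h2 0 = 0 :> R.
Proof. by rewrite /h2 addr0 ln1 mulr0 subr0. Qed.

Lemma h2_ge0 {x : R} : 0 <= x -> 0 <= h2 x.
Proof.
move=> x0; have x1 : 0 < 1 + x by lra.
have := ler_wpM2l (ltW x1) (subr1V_le_ln x1).
by rewrite /h2 subr_ge0 mulrBr mulr1 mulfV ?gt_eqF // addrC addKr.
Qed.

Lemma h2_superadditive {p q : R} : 0 <= p -> 0 <= q -> h2 p + h2 q <= h2 (p + q).
Proof.
move=> p0 q0; rewrite /h2.
(* Weighted sum of [1 - 1/y <= ln y] at y = S/(1+p), S/(1+q), S/((1+p)(1+q)),
   where S = 1 + p + q; the slack is p q / S. *)
have A0 : 0 < 1 + p by lra.
have B0 : 0 < 1 + q by lra.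
have S0 : 0 < 1 + (p + q) by lra.
have lnA := subr1V_le_ln (divr_gt0 S0 A0).
have lnB := subr1V_le_ln (divr_gt0 S0 B0).
have lnAB := subr1V_le_ln (divr_gt0 S0 (mulr_gt0 A0 B0)).
rewrite !invf_div !ln_div ?lnM ?posrE ?mulr_gt0 // in lnA lnB lnAB.
have eA := ler_wpM2l p0 lnA.
have eB := ler_wpM2l q0 lnB.
set S := 1 + (p + q) in S0 eA eB lnAB *.
have key : p * (1 - (1 + p) / S) + q * (1 - (1 + q) / S)
    + (1 - (1 + p) * (1 + q) / S) = p * q / S.
  by rewrite /S; field; rewrite gt_eqF.
have pq : 0 <= p * q / S by rewrite divr_ge0 ?mulr_ge0 // ltW.
have eS : S * ln S = p * ln S + q * ln S + ln S by rewrite /S; ring.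
rewrite eS; nra.
Qed.

Lemma le_h2 {p q : R} : 0 <= p -> p <= q -> h2 p <= h2 q.
Proof.
move=> p0 pq; have qp : 0 <= q - p by lra.
have := h2_superadditive p0 qp; rewrite [p + _]addrC subrK.
have := h2_ge0 qp; lra.
Qed.

Lemma continuous_h2 {x : R} : 0 < 1 + x -> {for x, continuous (@h2 R)}.
Proof.
move=> x1; have c1 : {for x, continuous (fun y : R => 1 + y)}.
  by apply: continuousD; [exact: cvg_cst | exact: cvg_id].
apply: continuousB; last exact: cvg_id.
by apply: continuousM => //; exact: continuous_comp c1 (continuous_ln x1).
Qed.

Lemma h2invP {y : R} : 0 <= y -> 0 <= h2inv y /\ h2 (h2inv y) = y.
Proof.
move=> y0; apply: (@getPex _ [set x : R | 0 <= x /\ h2 x = y]).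
pose X := expR (y + 2) - 1.
have eX : 1 + X = expR (y + 2) by rewrite /X addrC subrK.
have E_ge := expR_ge1Dx (y + 2).
have X0 : 0 <= X by rewrite /X; lra.
have hX : y <= h2 X by rewrite /h2 eX expRK /X; nra.
have [c] : exists2 c, c \in `[0, X] & h2 c = y.
  apply: IVT; first by lra.
    apply: continuous_in_subspaceT => z; rewrite inE /= in_itv /= => /andP[z0 _].
    by apply: continuous_h2; lra.
  by rewrite h2_0 ge_min le_max y0 hX orbT.
by rewrite in_itv /= => /andP[c0 _] hc; exists c.
Qed.

End h2.

Section Psi2.
Context {R : realType} {L : R}.
Hypothesis L_gt0 : 0 < L.

Let c_ge0 : 0 <= 2 / L ^+ 2 :> R.
Proof. by rewrite divr_ge0 ?exprn_ge0 ?ltW. Qed.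

Lemma Psi2_0 : Psi2 L 0 = 0.
Proof. by rewrite /Psi2 mulr0 h2_0 mulr0 expR0 subrr. Qed.

Lemma le_Psi2 (s t : R) : 0 <= s -> s <= t -> Psi2 L s <= Psi2 L t.
Proof.
move=> s0 st; rewrite /Psi2 lerD2r ler_expR; apply: ler_wpM2l => //.
apply: le_h2; first by rewrite mulr_ge0 // ltW.
by rewrite ler_wpM2l // ltW.
Qed.

Lemma Psi2_ge0 (s : R) : 0 <= s -> 0 <= Psi2 L s.
Proof. by move=> s0; rewrite -Psi2_0 le_Psi2. Qed.

Lemma continuous_Psi2 (s : R) : 0 <= s -> {for s, continuous (Psi2 L)}.
Proof.
move=> s0; apply: continuousB; last exact: cvg_cst.
apply: (continuous_comp _ (@continuous_expR R _)).
apply: continuousM; first exact: cvg_cst.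
have cL : {for s, continuous (fun s : R => L * s)}.
  by apply: continuousM; [exact: cvg_cst | exact: cvg_id].
apply: (continuous_comp cL); apply: continuous_h2.
by have := mulr_ge0 (ltW L_gt0) s0; lra.
Qed.

Lemma Psi2_scale_le {a s : R} : 1 <= a -> 0 <= s -> Psi2 (a * L) (s / a) <= Psi2 L s.
Proof.
move=> a1 s0; have a0 : 0 < a by lra.
rewrite /Psi2 (_ : a * L * (s / a) = L * s); last by field; rewrite gt_eqF.
rewrite lerD2r ler_expR; apply: ler_wpM2r.
  by apply: h2_ge0; rewrite mulr_ge0 // ltW.
rewrite ler_pM2l // lef_pV2 ?posrE ?exprn_gt0 ?mulr_gt0 // exprMn.
by rewrite ler_peMl ?exprn_ge0 ?expr_ge1 // ltW.
Qed.

Lemma Psi2_shift {b r : R} : 0 <= b -> 0 <= r ->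
  expR (2 / L ^+ 2 * h2 b) * (1 + Psi2 L r) <= 1 + Psi2 L (r + b / L).
Proof.
move=> b0 r0; rewrite /Psi2 !(addrC 1) !subrK -expRD ler_expR -mulrDr.
rewrite (_ : L * (r + b / L) = b + L * r); last by field; rewrite gt_eqF.
apply: ler_wpM2l => //.
exact: h2_superadditive b0 (mulr_ge0 (ltW L_gt0) r0).
Qed.

End Psi2.

Lemma harmonic_nonincreasing {R : realFieldType} : nonincreasing_seq (@harmonic R).
Proof. by move=> m n mn; rewrite /= lef_pV2 ?posrE ?ltr0n // ler_nat. Qed.

Section orlicz_norm.
Context {d : measure_display} {T : measurableType d} {R : realType}.
Variable P : probability T R.
Context {Psi : R -> R}.
Hypothesis Psi_ge0 : forall s, 0 <= s -> 0 <= Psi s.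
Hypothesis le_Psi : forall s t, 0 <= s -> s <= t -> Psi s <= Psi t.
Hypothesis continuous_Psi : forall s, 0 <= s -> {for s, continuous Psi}.

Lemma measurable_Psi_normrM {f : T -> R} {k : R} : measurable_fun setT f -> 0 <= k ->
  measurable_fun setT (fun x => (Psi (`|f x| * k))%:E).
Proof.
move=> mf k0; apply/measurable_EFinP.
suff cont : continuous (fun y : R => Psi (`|y| * k)).
  exact: measurableT_comp (continuous_measurable_fun cont) mf.
move=> y; have c1 : {for y, continuous (fun y : R => `|y| * k)}.
  by apply: continuousM; [exact: norm_continuous | exact: cvg_cst].
by apply: (continuous_comp c1); apply: continuous_Psi; rewrite mulr_ge0.
Qed.

Lemma orlicz_norm_ub {f : T -> R} {c : R} : 0 < c ->
  (\int[P]_x (Psi (`|f x| / c))%:E <= 1)%E -> (orlicz_norm P Psi f <= c%:E)%E.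
Proof. by move=> c0 hc; apply: ereal_inf_lbound; exists c. Qed.

Lemma orlicz_norm_lt_integral_le1 {f : T -> R} {c : R} :
  measurable_fun setT f -> (orlicz_norm P Psi f < c%:E)%E ->
  (\int[P]_x (Psi (`|f x| / c))%:E <= 1)%E.
Proof.
move=> mf /ereal_inf_lt[_ [c' [c'0 hc'] <-]]; rewrite lte_fin => c'c.
have c0 : 0 < c := lt_trans c'0 c'c.
apply: le_trans hc'; apply: ge0_le_integral => //.
- by move=> x _; rewrite lee_fin; apply: Psi_ge0; rewrite divr_ge0 // ltW.
- by apply: measurable_Psi_normrM mf _; rewrite invr_ge0 ltW.
- by apply: measurable_Psi_normrM mf _; rewrite invr_ge0 ltW.
move=> x _; rewrite lee_fin; apply: le_Psi; first by rewrite divr_ge0 // ltW.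
by rewrite ler_wpM2l // lef_pV2 ?posrE // ltW.
Qed.

Lemma orlicz_norm_integral_le1 {f : T -> R} {c : R} :
  measurable_fun setT f -> 0 < c -> (orlicz_norm P Psi f <= c%:E)%E ->
  (\int[P]_x (Psi (`|f x| / c))%:E <= 1)%E.
Proof.
move=> mf c0 fc.
pose w n : R := 1 - harmonic n / 2.
have w_gt0 n : 0 < w n.
  have : harmonic n <= 1 :> R by rewrite /= invf_le1 ?ltr0n ?ler1n.
  rewrite /w; lra.
have w_lt1 n : w n < 1 by have := @harmonic_gt0 R n; rewrite /w; lra.
have nd_w : nondecreasing_seq w.
  by move=> m n mn; rewrite /w lerD2l lerN2 ler_pM2r //; exact: harmonic_nonincreasing.
have cvg_w : w @ \oo --> (1 : R).
  rewrite -[X in _ --> X]subr0 -(mul0r 2^-1) /w.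
  apply: cvgB; first exact: cvg_cst.
  exact: cvgMr_tmp cvg_harmonic.
have k_ge0 n : 0 <= w n / c by rewrite divr_ge0 ?ltW.
pose g n x := (Psi (`|f x| * (w n / c)))%:E.
have mg n : measurable_fun setT (g n) := measurable_Psi_normrM mf (k_ge0 n).
have g_ge0 n x : (0 <= g n x)%E by rewrite lee_fin; apply: Psi_ge0; rewrite mulr_ge0.
have nd_g x : nondecreasing_seq (g^~ x).
  move=> m n mn; rewrite lee_fin; apply: le_Psi; first by rewrite mulr_ge0.
  apply: ler_wpM2l => //; apply: ler_wpM2r; last exact: nd_w.
  by rewrite invr_ge0 ltW.
have lim_g x : limn (g^~ x) = (Psi (`|f x| / c))%:E.
  apply/cvg_lim => //; apply/cvg_EFin; first exact: nearW.
  have cvg_arg : (fun n => `|f x| * (w n / c)) @ \oo --> `|f x| * (1 / c).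
    by apply: cvgM; [exact: cvg_cst | exact: cvgMr_tmp cvg_w].
  rewrite mul1r in cvg_arg.
  exact: cvg_comp cvg_arg (continuous_Psi _ (divr_ge0 (normr_ge0 _) (ltW c0))).
have int_g_le1 n : (\int[P]_x g n x <= 1)%E.
  rewrite /g; under eq_integral do rewrite -invf_div.
  apply: orlicz_norm_lt_integral_le1 mf _; apply: le_lt_trans fc _.
  by rewrite lte_fin ltr_pdivlMr // gtr_pMr.
have := @cvg_monotone_convergence _ _ _ P setT measurableT g mg
  (fun n x _ => g_ge0 n x) (fun x _ => nd_g x).
under eq_integral do rewrite lim_g.
by apply: cvge_le; apply: nearW.
Qed.

End orlicz_norm.

Lemma comp_bigmax_le_sum {R : realDomainType} {I : Type} (s : seq I) (F : R -> R)
    (x0 : R) (z : I -> R) :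
  0 <= F x0 -> (forall i, 0 <= F (z i)) ->
  F (\big[Num.max/x0]_(i <- s) z i) <= F x0 + \sum_(i <- s) F (z i).
Proof.
move=> F0 Fz; elim: s => [|i s IH]; first by rewrite !big_nil addr0.
have S0 : 0 <= \sum_(j <- s) F (z j) by rewrite sumr_ge0.
rewrite !big_cons maxEle; case: ifP => _; have := Fz i; lra.
Qed.

Lemma measurable_fun_bigmax {d : measure_display} {T : measurableType d} {R : realType}
    {I : Type} (s : seq I) (x0 : R) (f : I -> T -> R) :
  (forall i, measurable_fun setT (f i)) ->
  measurable_fun setT (fun x => \big[Num.max/x0]_(i <- s) f i x).
Proof.
move=> mf; elim: s => [|i s IH].
  by under eq_fun do rewrite big_nil; exact: measurable_cst.
by under eq_fun do rewrite big_cons; exact: measurable_maxr.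
Qed.

Lemma integral_le1_of_le_avg {d : measure_display} {T : measurableType d}
    {R : realType} (mu : {measure set T -> \bar R}) {m : nat}
    {F : 'I_m -> T -> \bar R} {G : T -> \bar R} :
  (forall j, measurable_fun setT (F j)) -> (forall j x, (0 <= F j x)%E) ->
  (forall j, (\int[mu]_x F j x <= 1)%E) ->
  measurable_fun setT G -> (forall x, (0 <= G x)%E) ->
  (forall x, (G x <= (1 + m%:R)^-1%:E * \sum_(j < m) F j x)%E) ->
  (\int[mu]_x G x <= 1)%E.
Proof.
move=> mF F0 intF mG G0 G_le.
have m1 : 0 < 1 + m%:R :> R by rewrite ltr_wpDr ?ler0n.
have avg0 : (0 <= (1 + m%:R)^-1%:E :> \bar R)%E by rewrite lee_fin invr_ge0 ltW.
apply: (@le_trans _ _ (\int[mu]_x ((1 + m%:R)^-1%:E * \sum_(j < m) F j x))%E).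
  apply: ge0_le_integral => //.
  by apply: measurable_funeM; exact: emeasurable_sum.
rewrite ge0_integralZl //; last 2 first.
- exact: emeasurable_sum.
- by move=> x _; exact: sume_ge0.
rewrite ge0_integral_sum //.
apply: le_trans (lee_wpmul2l avg0 (lee_sum _ (fun j _ => intF j))) _.
by rewrite sumEFin sumr_const card_ord -EFinM lee_fin ler_pdivrMl // mulr1 lerDr.
Qed.

Lemma Psi2_pos_part_bigmax_le {R : realType} (m : nat) (L tau : R) (z : 'I_m -> R) :
  0 < L -> 0 < tau -> (forall j, 0 <= z j) ->
  Psi2 (Num.sqrt 3 * L)
    (pos_part (\big[Num.max/0]_(j < m) z j
               - tau / L * h2inv (L ^+ 2 / 2 * ln (1 + m%:R)))
     / (Num.sqrt 3 * tau))
  <= (1 + m%:R)^-1 * \sum_(j < m) Psi2 L (z j / tau).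
Proof.
move=> L0 tau0 z0.
set u := \big[Num.max/0]_(j < m) z j.
have m1 : 0 < 1 + m%:R :> R by rewrite ltr_wpDr ?ler0n.
have y0 : 0 <= L ^+ 2 / 2 * ln (1 + m%:R).
  apply: mulr_ge0; first by rewrite divr_ge0 ?exprn_ge0 ?ltW.
  by apply: ln_ge0; rewrite lerDl.
have [b0 hb] := h2invP y0; set b := h2inv _ in b0 hb *.
have Psi2_z_ge0 j : 0 <= Psi2 L (z j / tau).
  by apply: Psi2_ge0; rewrite ?divr_ge0 ?z0 ?ltW.
have S0 : 0 <= \sum_(j < m) Psi2 L (z j / tau) by rewrite sumr_ge0.
have [u_le | u_gt] := lerP u (tau / L * b).
  rewrite /pos_part max_r ?subr_le0 // mul0r Psi2_0.
  by rewrite mulr_ge0 // invr_ge0 ltW.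
pose r := (u - tau / L * b) / tau.
have r0 : 0 <= r by rewrite divr_ge0 ?subr_ge0 // ltW.
have -> : pos_part (u - tau / L * b) / (Num.sqrt 3 * tau) = r / Num.sqrt 3.
  rewrite /pos_part max_l ?subr_ge0 ?ltW // /r; field.
  by rewrite !gt_eqF ?sqrtr_gt0.
apply: le_trans (Psi2_scale_le L0 _ r0) _.
  by rewrite -[X in X <= _]sqrtr1 ler_sqrt // ler1n.
have := Psi2_shift L0 b0 r0.
rewrite hb mulrA (_ : 2 / L ^+ 2 * (L ^+ 2 / 2) = 1); last by field; rewrite gt_eqF.
rewrite mul1r lnK ?posrE // (_ : r + b / L = u / tau); last first.
  by rewrite /r; field; rewrite !gt_eqF.
have := comp_bigmax_le_sum (index_enum 'I_m) (fun s => Psi2 L (s / tau)) 0 z.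
rewrite /= mul0r Psi2_0 add0r -/u => /(_ (lexx 0) Psi2_z_ge0) max_le shift.
rewrite mulrDr mulr1 in shift; rewrite ler_pdivlMl //; have := ler0n R m; lra.
Qed.

Theorem lemma10 (d : measure_display) (T : measurableType d) (R : realType)
  (P : probability T R) (m : nat) (Z : 'I_m -> {RV P >-> R}) (L tau : R) :
  0 < L -> 0 < tau ->
  (forall j : 'I_m, (orlicz_norm P (Psi2 L) (Z j) <= tau%:E)%E) ->
  (orlicz_norm P (Psi2 (Num.sqrt 3 * L))
     (fun x => pos_part ((\big[Num.max/0]_(j < m) `|Z j x|)%R
                         - tau / L * h2inv (L ^+ 2 / 2 * ln (1 + m%:R)))%R)
   <= (Num.sqrt 3 * tau)%:E)%E.
Proof.
move=> L0 tau0 hZ.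
have L3_gt0 : 0 < Num.sqrt 3 * L by rewrite mulr_gt0 ?sqrtr_gt0.
have tau3_gt0 : 0 < Num.sqrt 3 * tau by rewrite mulr_gt0 ?sqrtr_gt0.
have mZ j : measurable_fun setT (Z j) := measurable_funPT (Z j).
apply: (orlicz_norm_ub P tau3_gt0).
apply: (@integral_le1_of_le_avg _ _ _ P m (fun j x => (Psi2 L (`|Z j x| / tau))%:E)).
- move=> j; apply: (measurable_Psi_normrM (continuous_Psi2 L0) (mZ j)).
  by rewrite invr_ge0 ltW.
- by move=> j x; rewrite lee_fin; apply: Psi2_ge0 => //; rewrite divr_ge0 // ltW.
- move=> j; apply: orlicz_norm_integral_le1 (hZ j) => //.
  + exact: Psi2_ge0 L0.
  + exact: le_Psi2 L0.
  + exact: continuous_Psi2 L0.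
- apply: (measurable_Psi_normrM (continuous_Psi2 L3_gt0)); last by rewrite invr_ge0 ltW.
  apply: measurable_maxr (measurable_cst _); apply: measurable_funB (measurable_cst _).
  by apply: measurable_fun_bigmax => j; exact: measurableT_comp (mZ j).
- by move=> x; rewrite lee_fin; apply: Psi2_ge0 => //; rewrite divr_ge0 // ltW.
move=> x; rewrite sumEFin -EFinM lee_fin ger0_norm; last by rewrite le_max lexx orbT.
exact: Psi2_pos_part_bigmax_le.
Qed.
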